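(* Under the standing setup, with $x^*(g,h)$ the limit of the opinion dynamics, the quantity $f(g,h)\triangleq c^\top x^*(g,h)$ satisfies $$f(g,h)=\frac{(1-2\beta+(h-g)\gamma)\widehat s-\chi+(h+g)\beta+(g^2-h^2)\gamma}{1-\lambda+(g-h)\gamma}\;c^\top\mathbf 1.$$
   Context: Standing setup. Fix $n\in\mathbb N$ and $W=[w_{ij}]\in\mathbb R^{n\times n}$ with $w_{ij}\ge 0$ and $w_{ii}=0$. Let $\|W\|_\infty=\max_i\sum_j|w_{ij}|$, $\|W\|_1=\max_j\sum_i|w_{ij}|$, and let $\lambda$ be the spectral radius of $W$; assume there is a vector $c\in\mathbb R^n$ with all entries positive and $W^\top c=\lambda c$. Fix $\beta,\gamma$ with $\beta\ge\gamma\ge0$ and $1-\max\{\|W\|_\infty,\|W\|_1\}>\max\{2\beta,4\gamma\}$. Fix $s\in[0,1]^n$, $\overline s=\max_i s_i$, $\underline s=\min_i s_i$, and $g,h$ with $0\le g\le\underline s\le\overline s\le h\le1$. Set $\widehat c_i=c_i/\sum_j c_j$, $\widehat s=\sum_i\widehat c_i s_i$, $\chi=\sum_i\widehat c_i s_i\sum_j w_{ij}$. For $x\in\mathbb R$ set $\overline w(x)=\beta-\gamma|x-h|$, $\underline w(x)=\beta-\gamma|x-g|$, $\alpha_i(x)=1-\sum_j w_{ij}-\overline w(x)-\underline w(x)$; the opinion dynamics are $x_i(k+1)=\alpha_i(x_i(k))s_i+\sum_j w_{ij}x_j(k)+\overline w(x_i(k))h+\underline w(x_i(k))g$, which converge (from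 any $x(0)\in[0,1]^n$) to a point $x^*(g,h)$ independent of $x(0)$. *)

From HB Require Import structures.
From mathcomp Require Import all_boot all_order all_algebra.
Set Implicit Arguments. Unset Strict Implicit. Unset Printing Implicit Defensive.
Import Order.TTheory GRing.Theory Num.Theory.
Local Open Scope ring_scope.

Section Defs.
Variables (R : realFieldType) (n : nat).

Definition normInf (W : 'I_n -> 'I_n -> R) : R :=
  \big[Num.max/0]_(i < n) \sum_(j < n) `|W i j|.
Definition norm1 (W : 'I_n -> 'I_n -> R) : R :=
  \big[Num.max/0]_(j < n) \sum_(i < n) `|W i j|.

(* mu = p + i q is a (complex) eigenvalue of W, with eigenvector a + i b != 0,
   written in real and imaginary parts. *)
Definition complex_eigenpair (W : 'I_n -> 'I_n -> R) (p q : R)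
  (a b : 'I_n -> R) : Prop :=
  (exists i, a i != 0 \/ b i != 0) /\
  forall i, \sum_(j < n) W i j * a j = p * a i - q * b i /\
            \sum_(j < n) W i j * b j = q * a i + p * b i.

Definition is_spectral_radius (W : 'I_n -> 'I_n -> R) (lam : R) : Prop :=
  0 <= lam /\
  (exists p q a b, complex_eigenpair W p q a b /\ p ^+ 2 + q ^+ 2 = lam ^+ 2) /\
  (forall p q a b, complex_eigenpair W p q a b -> p ^+ 2 + q ^+ 2 <= lam ^+ 2).

Definition wbar (beta gamma h x : R) : R := beta - gamma * `|x - h|.
Definition wund (beta gamma g x : R) : R := beta - gamma * `|x - g|.
Definition alpha (W : 'I_n -> 'I_n -> R) (beta gamma g h : R) (i : 'I_n) (x : R) : R :=
  1 - \sum_(j < n) W i j - wbar beta gamma h x - wund beta gamma g x.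

Definition step (W : 'I_n -> 'I_n -> R) (s : 'I_n -> R) (beta gamma g h : R)
  (x : 'I_n -> R) (i : 'I_n) : R :=
  alpha W beta gamma g h i (x i) * s i + \sum_(j < n) W i j * x j
  + wbar beta gamma h (x i) * h + wund beta gamma g (x i) * g.

Definition chat (c : 'I_n -> R) (i : 'I_n) : R := c i / \sum_(j < n) c j.
Definition shat (c s : 'I_n -> R) : R := \sum_(i < n) chat c i * s i.
Definition chi (W : 'I_n -> 'I_n -> R) (c s : 'I_n -> R) : R :=
  \sum_(i < n) chat c i * s i * \sum_(j < n) W i j.

Definition converges_to (x : nat -> 'I_n -> R) (xs : 'I_n -> R) : Prop :=
  forall e : R, 0 < e -> exists N : nat, forall k : nat, (N <= k)%N ->
    forall i, `|x k i - xs i| < e.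
End Defs.

From HB Require Import structures.
From mathcomp Require Import all_boot all_order all_algebra.
From mathcomp Require Import ring lra.
Import Order.TTheory GRing.Theory Num.Theory.
Set Implicit Arguments. Unset Strict Implicit. Unset Printing Implicit Defensive.
Local Open Scope ring_scope.

(* 1. The dynamics keeps the unit box [0,1]^n invariant: each step is a
      combination of s_i, h, g and the x_j with nonnegative weights
      alpha_i, wbar, wund, w_ij summing to one (step_le, step_ge).
   2. The limit x* stays in [0,1]^n and, the step map being Lipschitz, it is
      a fixed point of the step map (limit_bounds, limit_fixpoint).
   3. Every fixed point in [0,1]^n lies in [g,h]^n: evaluated at its largest
      (resp. smallest) coordinate, the fixed-point equation is an average that
      cannot exceed h (resp. fall below g) (fixpoint_in_range).
   4. On [g,h]^n the absolute values in wbar, wund have a fixed sign, so the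
      fixed-point equation is linear (fixpoint_linear); weighting it by the
      positive left eigenvector c, with W^T c = lam c, gives a linear equation
      for f (weighted_fixpoint).
   5. Since lam <= ||W||_inf < 1 - 4 gamma, the coefficient
      1 - lam + (g - h) gamma of f is positive and we can solve for f. *)

Lemma limit_bounds (R : realFieldType) (n : nat) (x : nat -> 'I_n -> R)
    (xstar : 'I_n -> R) (lo hi : R) :
  (forall k i, lo <= x k i <= hi) -> converges_to x xstar ->
  forall i, lo <= xstar i <= hi.
Proof.
move=> xb conv i; apply/andP; split; apply/ler_addgt0Pr => e e0;
  have [N /(_ N (leqnn N) i)] := conv e e0;
  rewrite ltr_norml => /andP[? ?]; have /andP[? ?] := xb N i; lra.
Qed.

Lemma limit_fixpoint (R : realFieldType) (n : nat)
    (F : ('I_n -> R) -> 'I_n -> R) (K : 'I_n -> R)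
    (x : nat -> 'I_n -> R) (xstar : 'I_n -> R) :
  (forall i, 0 <= K i) ->
  (forall y z i d, (forall j, `|y j - z j| <= d) -> `|F y i - F z i| <= K i * d) ->
  (forall k i, x k.+1 i = F (x k) i) -> converges_to x xstar ->
  forall i, xstar i = F xstar i.
Proof.
move=> K0 FK xF conv i; apply/eqP; rewrite -subr_eq0 -normr_le0.
apply/ler_addgt0Pr => e e0; rewrite add0r.
set d := e / (K i + 1).
have d0 : 0 < d by apply: divr_gt0; have := K0 i; lra.
have Kd : (K i + 1) * d = e by rewrite /d mulrC mulfVK //; have := K0 i; lra.
have [N HN] := conv d d0.
have near_N1 : `|xstar i - x N.+1 i| < d by rewrite distrC; apply: HN.
have near_F : `|F (x N) i - F xstar i| <= K i * d.
  by apply: FK => j; apply/ltW/HN.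
have -> : xstar i - F xstar i = (xstar i - x N.+1 i) + (F (x N) i - F xstar i).
  by rewrite xF; ring.
apply: le_trans (ler_normD _ _) _; lra.
Qed.

Lemma le_of_averaging (R : realFieldType) (n : nat) (y r : 'I_n -> R) (hi : R) :
  (forall i, r i < 1) ->
  (forall i, (forall j, y j <= y i) -> y i <= (1 - r i) * hi + r i * y i) ->
  forall i, y i <= hi.
Proof.
move=> r_lt1 avg i; case: (@arg_maxP _ _ _ i predT y isT) => m _ ym_max.
apply: le_trans (ym_max i isT) _.
have {}avg : (1 - r m) * (y m - hi) <= 0 by have := avg m (fun j => ym_max j isT); lra.
by move: avg; rewrite pmulr_rle0 ?subr_le0 ?subr_gt0.
Qed.

Lemma ge_of_averaging (R : realFieldType) (n : nat) (y r : 'I_n -> R) (lo : R) :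
  (forall i, r i < 1) ->
  (forall i, (forall j, y i <= y j) -> (1 - r i) * lo + r i * y i <= y i) ->
  forall i, lo <= y i.
Proof.
move=> r_lt1 avg i; rewrite -lerN2.
apply: (@le_of_averaging R n (fun i => - y i) r) => // j ymin.
have ymin' k : y j <= y k by have := ymin k; rewrite lerN2.
have := avg j ymin'; lra.
Qed.

Lemma wbar_range (R : realFieldType) (beta gamma a x : R) :
  0 <= gamma -> gamma <= beta -> `|x - a| <= 1 -> 0 <= wbar beta gamma a x <= beta.
Proof.
move=> g0 gb xa; rewrite /wbar.
have := ler_wpM2l g0 xa; have := mulr_ge0 g0 (normr_ge0 (x - a)).
rewrite mulr1 => ? ?; apply/andP; split; lra.
Qed.

Lemma wbar_lipschitz (R : realFieldType) (beta gamma a x y : R) :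
  0 <= gamma -> `|wbar beta gamma a x - wbar beta gamma a y| <= gamma * `|x - y|.
Proof.
move=> g0; rewrite /wbar.
have -> : beta - gamma * `|x - a| - (beta - gamma * `|y - a|) =
          gamma * (`|y - a| - `|x - a|) by ring.
rewrite normrM ger0_norm // ler_wpM2l // distrC.
by have := ler_dist_dist (x - a) (y - a); rewrite opprB addrA subrK addrC.
Qed.

Lemma left_eigen_sum (R : realFieldType) (n : nat) (W : 'I_n -> 'I_n -> R)
    (c y : 'I_n -> R) (lam : R) :
  (forall j, \sum_(i < n) W i j * c i = lam * c j) ->
  \sum_(i < n) c i * \sum_(j < n) W i j * y j = lam * \sum_(j < n) c j * y j.
Proof.
move=> eig; rewrite mulr_sumr.
under eq_bigr do rewrite mulr_sumr.
rewrite exchange_big; apply: eq_bigr => j _.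
by rewrite mulrA -eig mulr_suml; apply: eq_bigr => i _; ring.
Qed.

Lemma sum_gt0 (R : realFieldType) (n : nat) (c : 'I_n -> R) :
  (0 < n)%N -> (forall i, 0 < c i) -> 0 < \sum_(i < n) c i.
Proof.
move=> n_gt0 c0; rewrite (bigD1 (Ordinal n_gt0)) //= ltr_wpDr //.
by apply: sumr_ge0 => i _; apply: ltW.
Qed.

Section OpinionStep.
Variables (R : realFieldType) (n : nat) (W : 'I_n -> 'I_n -> R) (s : 'I_n -> R).
Variables (beta gamma g h : R).
Hypothesis W_ge0 : forall i j, 0 <= W i j.
Hypothesis gamma_ge0 : 0 <= gamma.
Hypotheses (g01 : 0 <= g <= 1) (h01 : 0 <= h <= 1) (s01 : forall i, 0 <= s i <= 1).

Local Notation rowsum i := (\sum_(j < n) W i j).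
Local Notation step := (step W s beta gamma g h).

Lemma step_lipschitz (y z : 'I_n -> R) i d :
  (forall j, `|y j - z j| <= d) ->
  `|step y i - step z i| <= (2 * gamma + rowsum i) * d.
Proof.
move=> yz.
have weight_term a : 0 <= a <= 1 ->
    `|(wbar beta gamma a (y i) - wbar beta gamma a (z i)) * (a - s i)| <= gamma * d.
  move=> /andP[a0 a1]; rewrite normrM -[gamma * d]mulr1; apply: ler_pM => //.
    apply: le_trans (wbar_lipschitz _ _ _ _ gamma_ge0) _; exact: ler_wpM2l.
  by have /andP[? ?] := s01 i; rewrite ler_norml; apply/andP; split; lra.
have sum_term : `|\sum_(j < n) W i j * (y j - z j)| <= rowsum i * d.
  apply: le_trans (ler_norm_sum _ _ _) _; rewrite mulr_suml; apply: ler_sum => j _.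
  by rewrite normrM ger0_norm // ler_wpM2l.
have -> : step y i - step z i =
    (wbar beta gamma h (y i) - wbar beta gamma h (z i)) * (h - s i) +
    (wbar beta gamma g (y i) - wbar beta gamma g (z i)) * (g - s i) +
    \sum_(j < n) W i j * (y j - z j).
  rewrite /step /alpha /wund /wbar (eq_bigr _ (fun j _ => mulrBr _ _ _)) sumrB; ring.
apply: le_trans (ler_normD _ _) _.
have := ler_normD ((wbar beta gamma h (y i) - wbar beta gamma h (z i)) * (h - s i))
  ((wbar beta gamma g (y i) - wbar beta gamma g (z i)) * (g - s i)).
have := weight_term h h01; have := weight_term g g01; lra.
Qed.

Hypothesis gamma_le_beta : gamma <= beta.
Hypothesis rowsum_small : forall i, 2 * beta < 1 - rowsum i.

(* Each row carries mass less than one, so the self-weight is positive. *)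
Lemma rowsum_lt1 i : rowsum i < 1.
Proof. have := rowsum_small i; have := gamma_ge0; have := gamma_le_beta; lra. Qed.

Lemma step_weights_ge0 (y : 'I_n -> R) i : 0 <= y i <= 1 ->
  [/\ 0 <= alpha W beta gamma g h i (y i), 0 <= wbar beta gamma h (y i)
     & 0 <= wund beta gamma g (y i)].
Proof.
move=> /andP[y0 y1].
have dist1 a : 0 <= a <= 1 -> `|y i - a| <= 1.
  by move=> /andP[? ?]; rewrite ler_norml; apply/andP; split; lra.
have /andP[b0 bb] := wbar_range gamma_ge0 gamma_le_beta (dist1 h h01).
have /andP[d0 db] : 0 <= wund beta gamma g (y i) <= beta.
  exact: wbar_range gamma_ge0 gamma_le_beta (dist1 g g01).
by split=> //; rewrite /alpha; have := rowsum_small i; lra.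
Qed.

Lemma step_le (y : 'I_n -> R) i (hi hi' : R) :
  0 <= y i <= 1 -> s i <= hi -> h <= hi -> g <= hi -> (forall j, y j <= hi') ->
  step y i <= (1 - rowsum i) * hi + rowsum i * hi'.
Proof.
move=> /step_weights_ge0[a0 b0 d0] shi hhi ghi yhi.
have sum_le : \sum_(j < n) W i j * y j <= rowsum i * hi'.
  by rewrite mulr_suml; apply: ler_sum => j _; rewrite ler_wpM2l.
have := ler_wpM2l a0 shi; have := ler_wpM2l b0 hhi; have := ler_wpM2l d0 ghi.
rewrite /step /alpha; lra.
Qed.

Lemma step_ge (y : 'I_n -> R) i (lo lo' : R) :
  0 <= y i <= 1 -> lo <= s i -> lo <= h -> lo <= g -> (forall j, lo' <= y j) ->
  (1 - rowsum i) * lo + rowsum i * lo' <= step y i.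
Proof.
move=> /step_weights_ge0[a0 b0 d0] slo hlo glo ylo.
have sum_ge : rowsum i * lo' <= \sum_(j < n) W i j * y j.
  by rewrite mulr_suml; apply: ler_sum => j _; rewrite ler_wpM2l.
have := ler_wpM2l a0 slo; have := ler_wpM2l b0 hlo; have := ler_wpM2l d0 glo.
rewrite /step /alpha; lra.
Qed.

Lemma fixpoint_in_range (y : 'I_n -> R) :
  g <= h -> (forall i, g <= s i <= h) ->
  (forall i, 0 <= y i <= 1) -> (forall i, y i = step y i) ->
  forall i, g <= y i <= h.
Proof.
move=> gh gsh y01 fix_y i; have [g0 _] := andP g01; have [h0 _] := andP h01.
apply/andP; split.
- apply: (@ge_of_averaging R n y (fun i => rowsum i)) => [|j ymin]; first exact: rowsum_lt1.
  by rewrite [X in _ <= X]fix_y; apply: step_ge; case/andP: (gsh j).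
- apply: (@le_of_averaging R n y (fun i => rowsum i)) => [|j ymax]; first exact: rowsum_lt1.
  by rewrite [X in X <= _]fix_y; apply: step_le; case/andP: (gsh j).
Qed.

Lemma fixpoint_linear (y : 'I_n -> R) i :
  g <= y i <= h -> y i = step y i ->
  y i * (1 - (h - g) * gamma) =
    (1 - 2 * beta + (h - g) * gamma) * s i - s i * rowsum i
    + \sum_(j < n) W i j * y j + ((h + g) * beta + (g ^+ 2 - h ^+ 2) * gamma).
Proof.
move=> /andP[gy yh]; rewrite /step /alpha /wbar /wund.
rewrite ler0_norm ?subr_le0 // ger0_norm ?subr_ge0 // => fix_y.
by rewrite mulrBr mulr1 {1}fix_y; ring.
Qed.

Lemma weighted_fixpoint (c y : 'I_n -> R) (lam : R) :
  (forall j, \sum_(i < n) W i j * c i = lam * c j) ->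
  (forall i, g <= y i <= h) -> (forall i, y i = step y i) ->
  (\sum_(i < n) c i * y i) * (1 - lam + (g - h) * gamma) =
    (1 - 2 * beta + (h - g) * gamma) * \sum_(i < n) c i * s i
    - \sum_(i < n) c i * s i * rowsum i
    + ((h + g) * beta + (g ^+ 2 - h ^+ 2) * gamma) * \sum_(i < n) c i.
Proof.
move=> eig yr fix_y.
have fix_sum : (\sum_(i < n) c i * y i) * (1 - (h - g) * gamma) =
    (1 - 2 * beta + (h - g) * gamma) * \sum_(i < n) c i * s i
    - \sum_(i < n) c i * s i * rowsum i
    + \sum_(i < n) c i * \sum_(j < n) W i j * y j
    + ((h + g) * beta + (g ^+ 2 - h ^+ 2) * gamma) * \sum_(i < n) c i.
  rewrite mulr_suml !mulr_sumr -sumrN -!big_split /=; apply: eq_bigr => i _.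
  by rewrite -mulrA fixpoint_linear //; ring.
move: fix_sum; rewrite (left_eigen_sum y eig); lra.
Qed.

Lemma trajectory_in_unit_box (x : nat -> 'I_n -> R) :
  (forall i, 0 <= x 0%N i <= 1) -> (forall k i, x k.+1 i = step (x k) i) ->
  forall k i, 0 <= x k i <= 1.
Proof.
move=> x0 xs; elim=> [|k IH] i //; have [g0 g1] := andP g01; have [h0 h1] := andP h01.
have [s0 s1] := andP (s01 i).
have IH0 j : 0 <= x k j by case/andP: (IH j).
have IH1 j : x k j <= 1 by case/andP: (IH j).
rewrite xs; apply/andP; split.
- have := @step_ge (x k) i 0 0 (IH i) s0 h0 g0 IH0; lra.
- have := @step_le (x k) i 1 1 (IH i) s1 h1 g1 IH1; lra.
Qed.

End OpinionStep.

Lemma rowsum_le_normInf (R : realFieldType) (n : nat) (W : 'I_n -> 'I_n -> R) i :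
  (forall i j, 0 <= W i j) -> \sum_(j < n) W i j <= normInf W.
Proof.
move=> W0; apply: le_trans (le_bigmax _ _ i).
by apply: ler_sum => j _; rewrite ger0_norm.
Qed.

(* An eigenvalue with a positive left eigenvector is at most ||W||_inf:
   lam sum_i c_i = sum_i c_i sum_j w_ij. *)
Lemma eigenvalue_le_normInf (R : realFieldType) (n : nat) (W : 'I_n -> 'I_n -> R)
    (c : 'I_n -> R) (lam : R) :
  (0 < n)%N -> (forall i j, 0 <= W i j) -> (forall i, 0 < c i) ->
  (forall j, \sum_(i < n) W i j * c i = lam * c j) ->
  lam <= normInf W.
Proof.
move=> n_gt0 W0 c0 eig.
have C0 := sum_gt0 n_gt0 c0.
have lamC : lam * \sum_(i < n) c i = \sum_(i < n) c i * \sum_(j < n) W i j.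
  rewrite mulr_sumr; under eq_bigr do rewrite -eig.
  rewrite exchange_big; apply: eq_bigr => i _; rewrite mulr_sumr.
  by apply: eq_bigr => j _; rewrite mulrC.
rewrite -(ler_pM2r C0) lamC mulr_sumr; apply: ler_sum => i _.
by rewrite mulrC ler_wpM2r ?rowsum_le_normInf // ltW.
Qed.

Lemma shatE (R : realFieldType) (n : nat) (c s : 'I_n -> R) :
  shat c s = (\sum_(i < n) c i * s i) / \sum_(i < n) c i.
Proof. by rewrite /shat mulr_suml; apply: eq_bigr => i _; rewrite /chat mulrAC. Qed.

Lemma chiE (R : realFieldType) (n : nat) (W : 'I_n -> 'I_n -> R) (c s : 'I_n -> R) :
  chi W c s = (\sum_(i < n) c i * s i * \sum_(j < n) W i j) / \sum_(i < n) c i.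
Proof. by rewrite /chi mulr_suml; apply: eq_bigr => i _; rewrite /chat; ring. Qed.

Theorem corollary1 (R : realFieldType) (n : nat)
  (W : 'I_n -> 'I_n -> R) (lam : R) (c : 'I_n -> R)
  (beta gamma g h : R) (s : 'I_n -> R)
  (x : nat -> 'I_n -> R) (xstar : 'I_n -> R) :
  (forall i j, 0 <= W i j) ->
  (forall i, W i i = 0) ->
  is_spectral_radius W lam ->
  (forall i, 0 < c i) ->
  (forall j, \sum_(i < n) W i j * c i = lam * c j) ->
  gamma <= beta -> 0 <= gamma ->
  Num.max (2 * beta) (4 * gamma) < 1 - Num.max (normInf W) (norm1 W) ->
  (forall i, 0 <= s i <= 1) ->
  0 <= g -> h <= 1 ->
  (forall i, g <= s i) -> (forall i, s i <= h) ->
  (forall i, 0 <= x 0%N i <= 1) ->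
  (forall k i, x k.+1 i = step W s beta gamma g h (x k) i) ->
  converges_to x xstar ->
  \sum_(i < n) c i * xstar i =
    ((1 - 2 * beta + (h - g) * gamma) * shat c s - chi W c s
      + (h + g) * beta + (g ^+ 2 - h ^+ 2) * gamma)
    / (1 - lam + (g - h) * gamma) * \sum_(i < n) c i.
Proof.
move=> W0 _ _ c0 eig gb g0 small s01 g_ge0 h_le1 gs sh x0 xs conv.
have [n0|n_gt0] := posnP n; first by subst n; rewrite !big_ord0 mulr0.
have [g_le_h g01 h01] : [/\ g <= h, 0 <= g <= 1 & 0 <= h <= 1].
  by have := gs (Ordinal n_gt0); have := sh (Ordinal n_gt0) => ? ?; split; try apply/andP; lra.
have [beta_small gamma_small] : 2 * beta < 1 - normInf W /\ 4 * gamma < 1 - normInf W.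
  have : normInf W <= Num.max (normInf W) (norm1 W) by rewrite le_max lexx.
  by move: small; rewrite gt_max => /andP[? ?]; split; lra.
have rowsum_small i : 2 * beta < 1 - \sum_(j < n) W i j.
  by have := rowsum_le_normInf i W0; lra.
have x01 := trajectory_in_unit_box W0 g0 g01 h01 s01 gb rowsum_small x0 xs.
have xstar_fix : forall i, xstar i = step W s beta gamma g h xstar i.
  apply: (limit_fixpoint (K := fun i => 2 * gamma + \sum_(j < n) W i j)) xs conv.
    by move=> i; apply: addr_ge0; [lra | apply: sumr_ge0].
  by move=> y z i d; apply: step_lipschitz.
have gsh i : g <= s i <= h by rewrite gs sh.
have xstar_range := fixpoint_in_range W0 g0 g01 h01 gb rowsum_small g_le_h gsh
  (limit_bounds x01 conv) xstar_fix.
have denom_gt0 : 0 < 1 - lam + (g - h) * gamma.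
  have := eigenvalue_le_normInf n_gt0 W0 c0 eig.
  have : (h - g) * gamma <= gamma by rewrite ler_piMl //; lra.
  lra.
have C0 := sum_gt0 n_gt0 c0.
rewrite shatE chiE; apply: (mulIf (lt0r_neq0 denom_gt0)).
rewrite (weighted_fixpoint eig xstar_range xstar_fix); field.
by rewrite !lt0r_neq0.
Qed.
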